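(* Let $\beta$ be a Pisot number. There exists $N_0=N_0(\beta)\in\mathbb{N}$ such that for every sequence $x_1,x_2,\dots$ of finite words in $X_\beta$ and every $N>N_0$, the infinite concatenation $0^Nx_10^Nx_20^N\cdots$ belongs to $X_\beta$.
   Context: Let $B=\lceil\beta\rceil$ and $T_\beta(x)=\beta x\bmod1$. For $x\in[0,1)$ its greedy $\beta$-expansion is the digit sequence $d_k=\lfloor\beta T_\beta^{k-1}x\rfloor\in\{0,\dots,B-1\}$, $k\ge1$. The $\beta$-shift $X_\beta\subseteq\{0,\dots,B-1\}^{\mathbb{N}}$ is the closure (in the product topology) of the set of greedy $\beta$-expansions of points of $[0,1)$; it is shift-invariant. A finite word is in $X_\beta$ if some element of $X_\beta$ begins with it. $0^N$ denotes the word of $N$ zeros. A Pisot number is an algebraic integer $\beta>1$ whose conjugates have modulus $<1$ (integers $\ge2$ included). *)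

From HB Require Import structures.
From mathcomp Require Import all_boot all_order all_algebra.
From mathcomp Require Import reals.
From mathcomp Require Import complex.
Set Implicit Arguments. Unset Strict Implicit. Unset Printing Implicit Defensive.
Import Order.TTheory GRing.Theory Num.Theory.
Local Open Scope ring_scope.

Section Beta.
Variable R : realType.

(* Pisot number: algebraic integer beta > 1 (root of a monic integer
   polynomial p which is its minimal polynomial, i.e. p is irreducible over Q),
   all of whose conjugates (the other complex roots of p) have modulus < 1. *)
Definition pisot (beta : R) : Prop :=
  1 < beta /\
  exists p : {poly int},
    [/\ p \is monic,
        irreducible_poly (map_poly (intr : int -> rat) p),
        root (map_poly (intr : int -> R) p) beta &
        forall z : R[i], root (map_poly (intr : int -> R[i]) p) z ->
          z != (beta%:C)%C -> `|z| < 1].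

Definition Tbeta (beta x : R) : R := beta * x - (Num.floor (beta * x))%:~R.

(* greedy beta-expansion, 0-indexed: d k = floor(beta * T_beta^k x),
   i.e. digit d_{k+1} of the paper *)
Definition greedy (beta x : R) (k : nat) : int :=
  Num.floor (beta * iter k (Tbeta beta) x).

(* X_beta = closure (product topology on sequences over the alphabet) of the
   set of greedy expansions of points of [0,1): omega lies in the closure iff
   every cylinder (finite prefix) around omega meets that set. *)
Definition in_Xbeta (beta : R) (w : nat -> int) : Prop :=
  forall n : nat, exists x : R, 0 <= x /\ x < 1 /\
    forall k, (k < n)%N -> greedy beta x k = w k.

Definition word_in_Xbeta (beta : R) (u : seq int) : Prop :=
  exists w : nat -> int, in_Xbeta beta w /\
    forall k, (k < size u)%N -> w k = nth 0 u k.

End Beta.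

(* infinite concatenation b 0 ++ b 1 ++ b 2 ++ ... of nonempty blocks:
   its k-th symbol lies within the first k+1 blocks *)
Definition concat_stream (b : nat -> seq int) (k : nat) : int :=
  nth 0 (flatten [seq b i | i <- iota 0 k.+1]) k.

(* A word is a prefix of a greedy beta-expansion iff it has nonnegative digits
   and every suffix has value < 1. For a Pisot beta and such a word u of
   length m, the gap beta^m (1 - value u) is r(beta), where r is the remainder
   of X^m - u(X) modulo the minimal polynomial of beta. At the conjugates of
   beta, all of modulus < 1, the values of r are bounded independently of u;
   by Vandermonde interpolation so are its integer coefficients. Hence the gaps
   below 1 take finitely many values, and all gaps are at least some c > 0.
   Once beta^-N <= c, a block 0^N between two admissible words keeps every
   suffix value below 1. *)

From HB Require Import structures.
From mathcomp Require Import all_boot all_order all_algebra all_field.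
From mathcomp Require Import reals complex polyorder ring lra zify.
Set Implicit Arguments. Unset Strict Implicit. Unset Printing Implicit Defensive.
Import Order.TTheory GRing.Theory Num.Theory.
Local Open Scope ring_scope.

Lemma exists_pos_lbound (F : realDomainType) (s : seq F) :
  exists2 e : F, 0 < e & forall x, x \in s -> 0 < x -> e <= x.
Proof.
elim: s => [|a s [e e_gt0 le_e]]; first by exists 1.
have [a_gt0 | a_le0] := ltP 0 a.
  exists (Num.min a e); first by rewrite lt_min a_gt0.
  move=> x; rewrite in_cons => /predU1P[-> _ | xs x_gt0]; first by rewrite ge_min lexx.
  by rewrite ge_min le_e ?orbT.
exists e => // x; rewrite in_cons => /predU1P[-> | xs]; last exact: le_e.
by move=> /(le_lt_trans a_le0); rewrite ltxx.
Qed.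

Fixpoint bounded_words (M n : nat) : seq (seq int) :=
  if n is n'.+1 then
    [seq a :: c | a <- [seq k%:Z - M%:Z | k <- iota 0 (M + M).+1],
                  c <- bounded_words M n']
  else [:: [::]].

Lemma bounded_wordsP M (c : seq int) :
  {in c, forall a, `|a| <= M%:Z} -> c \in bounded_words M (size c).
Proof.
elim: c => [|a c IH] le_M; first by rewrite mem_seq1.
apply: (allpairs_f cons); last first.
  by apply: IH => b bc; apply: le_M; rewrite in_cons bc orbT.
have a_le : `|a| <= M%:Z by apply: le_M; rewrite mem_head.
by apply/mapP; exists (absz (a + M%:Z)); rewrite ?mem_iota; lia.
Qed.

Lemma ler_bernoulli (F : realDomainType) (x : F) n :
  0 <= x -> 1 + n%:R * x <= (1 + x) ^+ n.
Proof.
move=> x_ge0; elim: n => [|n IH]; first by rewrite mul0r addr0 expr0.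
have h1 : 1 <= (1 + x) ^+ n by rewrite exprn_ege1 // lerDl.
rewrite exprS -natr1; nra.
Qed.

Lemma exists_expr_ge (F : archiRealFieldType) (x y : F) :
  1 < x -> exists N0, forall N, (N0 <= N)%N -> y <= x ^+ N.
Proof.
move=> x_gt1; have x1_gt0 : 0 < x - 1 by rewrite subr_gt0.
pose N0 := Num.bound (`|y| / (x - 1)); exists N0 => N le_N.
have N0_gt : `|y| / (x - 1) < N%:R.
  apply: lt_le_trans (archi_boundP _) _; last by rewrite ler_nat.
  exact: divr_ge0 (normr_ge0 y) (ltW x1_gt0).
have := ler_bernoulli N (ltW x1_gt0); rewrite [1 + (x - 1)]addrC subrK.
apply: le_trans; apply: le_trans (ler_norm y) _.
rewrite ltr_pdivrMr // in N0_gt.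
by rewrite (le_trans (ltW N0_gt)) // lerDr.
Qed.

Lemma separable_irreducible (F : realFieldType) (q : {poly F}) :
  irreducible_poly q -> separable_poly q.
Proof.
move=> irr_q; have [size_q _] := irr_q.
have dq_neq0 : q^`() != 0 by rewrite -size_poly_gt0 size_deriv -subn1 subn_gt0.
rewrite unlock irreducible_poly_coprime //.
apply/negP => /(dvdp_leq dq_neq0); rewrite size_deriv leqNgt ltn_predL.
by rewrite (ltn_trans _ size_q).
Qed.

Lemma horner_rmodp_root (A F : comNzRingType) (f : {rmorphism A -> F})
    (p q : {poly A}) (x : F) :
  p \is monic -> root (map_poly f p) x ->
  (map_poly f (Pdiv.CommonRing.rmodp q p)).[x] = (map_poly f q).[x].
Proof.
move=> p_monic px0; rewrite [in RHS](Pdiv.RingMonic.rdivp_eq p_monic q).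
by rewrite rmorphD rmorphM /= hornerD hornerM (rootP px0) mulr0 add0r.
Qed.

Lemma coef_bounded_interpolation (C : numClosedFieldType) (zs : seq C)
    (B : C -> C) :
  uniq zs -> {in zs, forall z, 0 <= B z} ->
  exists2 K, 0 <= K & forall q : {poly C}, (size q <= size zs)%N ->
    {in zs, forall z, `|q.[z]| <= B z} -> forall i, `|q`_i| <= K.
Proof.
move=> uniq_zs B_ge0; set n := size zs.
pose V := Vandermonde n (\row_(j < n) zs`_j).
have V_unit : V \in unitmx.
  rewrite unitmxE unitfE det_Vandermonde; apply/prodf_neq0 => i _.
  apply/prodf_neq0 => j lt_ij.
  by rewrite !mxE subr_eq0 nth_uniq // gtn_eqF.
pose W := invmx V.
pose K_ i := \sum_(j < n) B zs`_j * `|W j i|.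
have K_ge0 i : 0 <= K_ i.
  by apply: sumr_ge0 => j _; rewrite mulr_ge0 // B_ge0 // mem_nth.
exists (\sum_(i < n) K_ i) => [|q size_q le_B i]; first exact: sumr_ge0.
have [lt_in | le_ni] := ltnP i n; last first.
  by rewrite nth_default ?normr0 ?sumr_ge0 ?(leq_trans size_q).
pose crow := \row_(k < n) q`_k.
have crowV j : (crow *m V) 0 j = q.[zs`_j].
  rewrite mxE (horner_coef_wide _ size_q).
  by apply: eq_bigr => k _; rewrite !mxE.
have -> : q`_i = crow 0 (Ordinal lt_in) by rewrite mxE.
rewrite -[crow](mulmxK V_unit) mxE [X in _ <= X](bigD1 (Ordinal lt_in)) //=.
apply: ler_wpDr; first exact: sumr_ge0.
apply: le_trans (ler_norm_sum _ _ _) (ler_sum _ _) => j _.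
by rewrite normrM crowV ler_wpM2r // le_B // mem_nth.
Qed.

Lemma size_flatten_iota_ge T (b : nat -> seq T) m s :
  (forall i, 0 < size (b i))%N -> (m <= size (flatten [seq b i | i <- iota s m]))%N.
Proof.
move=> b_gt0; elim: m s => [|m IH] s //=.
by rewrite size_cat -addn1 addnC leq_add.
Qed.

Lemma concat_stream_prefix (b : nat -> seq int) n :
  (forall i, 0 < size (b i))%N ->
  mkseq (concat_stream b) n = take n (flatten [seq b i | i <- iota 0 n]).
Proof.
move=> b_gt0; apply: (@eq_from_nth _ 0).
  by rewrite size_mkseq size_takel // size_flatten_iota_ge.
rewrite size_mkseq => k lt_kn; rewrite nth_mkseq // nth_take // /concat_stream.
rewrite -(subnKC lt_kn) iotaD map_cat flatten_cat [in RHS]nth_cat ifT //.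
exact: size_flatten_iota_ge.
Qed.

Lemma flatten_map_cat_shift I T (a : seq T) (f : I -> seq T) s :
  flatten [seq a ++ f i | i <- s] ++ a = a ++ flatten [seq f i ++ a | i <- s].
Proof. by elim: s => [|i s IH] /=; rewrite ?cats0 // -!catA IH. Qed.

Fixpoint digits_poly (s : seq int) : {poly int} :=
  if s is a :: t then a%:P * 'X^(size t) + digits_poly t else 0.

Fixpoint digits_eval (F : pzRingType) (x : F) (s : seq int) : F :=
  if s is a :: t then a%:~R * x ^+ size t + digits_eval x t else 0.

Lemma horner_digits_poly (F : comNzRingType) (x : F) s :
  (map_poly intr (digits_poly s)).[x] = digits_eval x s.
Proof.
elim: s => [|a t IH] /=; first by rewrite rmorph0 horner0.
by rewrite rmorphD rmorphM /= map_polyC map_polyXn hornerD IH hornerCM hornerXn.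
Qed.

Lemma rmorph_digits_eval (F G : comNzRingType) (f : {rmorphism F -> G}) x s :
  f (digits_eval x s) = digits_eval (f x) s.
Proof.
elim: s => [|a t IH] /=; first by rewrite rmorph0.
by rewrite rmorphD rmorphM rmorph_int rmorphXn IH.
Qed.

Lemma norm_digits_eval_le (F : numFieldType) (z b : F) s :
  `|z| < 1 -> 0 <= b -> {in s, forall a, `|a%:~R : F| <= b} ->
  `|digits_eval z s| <= b / (1 - `|z|).
Proof.
move=> z_lt1 b_ge0 le_b; have d_gt0 : 0 < 1 - `|z| by rewrite subr_gt0.
suff bound : `|digits_eval z s| * (1 - `|z|) <= b * (1 - `|z| ^+ size s).
  rewrite ler_pdivlMr //; apply: le_trans bound _.
  by rewrite -[leRHS]mulr1 ler_wpM2l // gerDl oppr_le0; apply: exprn_ge0.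
elim: s le_b => [|a t IH] le_b /=.
  by rewrite normr0 mul0r expr0 subrr mulr0.
have le_bt : {in t, forall c, `|c%:~R : F| <= b}.
  by move=> c ct; apply: le_b; rewrite in_cons ct orbT.
have a_le : `|a%:~R : F| <= b by apply: le_b; rewrite mem_head.
apply: le_trans (ler_wpM2r (ltW d_gt0) (ler_normD _ _)) _.
rewrite mulrDl normrM normrX.
apply: le_trans (lerD (ler_wpM2r (ltW d_gt0) (ler_wpM2r (exprn_ge0 _ _) a_le))
                      (IH le_bt)) _.
  exact: normr_ge0.
by rewrite exprS le_eqVlt; apply/predU1P; left; ring.
Qed.

Lemma complex_ler_natr (R : realType) (K : R[i]) : 0 <= K ->
  exists M : nat, K <= M%:R.
Proof.
move=> K_ge0; have ReK := RRe_real (ger0_real K_ge0).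
have ReK_ge0 : 0 <= complex.Re K by rewrite -ler0c ReK.
exists (Num.bound (complex.Re K)).
by rewrite -ReK -(rmorph_nat (real_complex R)) lecR ltW // archi_boundP.
Qed.

Lemma pisot_conjugates (R : realType) (beta : R) : pisot beta ->
  exists (p : {poly int}) (rs : seq R[i]),
  [/\ p \is monic, root (map_poly intr p) beta, uniq rs,
      size p = (size rs).+1 &
      {in rs, forall z, root (map_poly intr p) z /\ (z != (beta%:C)%C -> `|z| < 1)}].
Proof.
case=> _ [p [p_monic p_irr p_beta p_conj]].
pose pC := map_poly (intr : int -> R[i]) p.
have [rs def_pC] := closed_field_poly_normal pC.
have size_pC : size pC = size p by rewrite size_map_inj_poly //; exact: intr_inj.
have lead_pC : lead_coef pC = 1.
  by rewrite lead_coef_map_inj ?rmorph0 ?(monicP p_monic) ?rmorph1 //; exact: intr_inj.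
rewrite lead_pC scale1r in def_pC.
have rs_root z : z \in rs -> root pC z by rewrite def_pC root_prod_XsubC.
exists p, rs; split=> //.
- rewrite -separable_prod_XsubC -def_pC.
  have -> : pC = map_poly ratr (map_poly (intr : int -> rat) p).
    by rewrite -map_poly_comp; apply: eq_map_poly => a /=; rewrite ratr_int.
  by rewrite separable_map separable_irreducible.
- by rewrite -size_pC def_pC size_prod_XsubC.
by move=> z z_rs; split; [exact: rs_root | exact/p_conj/rs_root].
Qed.

Section BetaWords.
Variables (R : realType) (beta : R).
Hypothesis beta_gt1 : 1 < beta.

Fixpoint word_value (s : seq int) : R :=
  if s is a :: t then (a%:~R + word_value t) / beta else 0.

Fixpoint admissible (s : seq int) : Prop :=
  if s is a :: t then [/\ 0 <= a, word_value s < 1 & admissible t] else True.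

Let beta_gt0 : 0 < beta. Proof. exact: lt_trans ltr01 beta_gt1. Qed.

Lemma word_value_ge0 s : admissible s -> 0 <= word_value s.
Proof.
elim: s => [|a t IH] //= [a_ge0 _ /IH t_ge0].
by rewrite divr_ge0 ?addr_ge0 ?ler0z // ltW.
Qed.

Lemma word_value_lt1 s : admissible s -> word_value s < 1.
Proof. by case: s => [|a t] //= []. Qed.

Lemma word_value_cat u v :
  word_value (u ++ v) = word_value u + word_value v / beta ^+ size u.
Proof.
elim: u => [|a u IH] /=; first by rewrite expr0 divr1 add0r.
by rewrite IH exprS invfM; ring.
Qed.

Lemma word_value_nseq0 N : word_value (nseq N 0) = 0.
Proof. by elim: N => //= N ->; rewrite addr0 mul0r. Qed.

Lemma digits_eval_word_value u :
  digits_eval beta u = beta ^+ size u * word_value u.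
Proof.
elim: u => [|a t IH] /=; first by rewrite mulr0.
by rewrite IH exprS; field; rewrite gt_eqF.
Qed.

Lemma word_value_take_le s n :
  admissible s -> word_value (take n s) <= word_value s.
Proof.
elim: s n => [|a t IH] [|n] adm_s //; first exact: word_value_ge0.
by case: adm_s => _ _ adm_t /=; rewrite ler_pM2r ?invr_gt0 // lerD2l IH.
Qed.

Lemma admissible_take s n : admissible s -> admissible (take n s).
Proof.
elim: s n => [|a t IH] [|n] //= [a_ge0 lt1 adm_t]; split=> //; last exact: IH.
apply: le_lt_trans lt1; rewrite ler_pM2r ?invr_gt0 // lerD2l.
exact: word_value_take_le.
Qed.

Lemma admissible_nseq0_cat N s : admissible s -> admissible (nseq N 0 ++ s).
Proof.
elim: N => //= N IH /IH adm_s; split=> //.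
rewrite add0r ltr_pdivrMr // mul1r.
exact: lt_trans (word_value_lt1 adm_s) beta_gt1.
Qed.

Lemma admissible_digits u a :
  admissible u -> a \in u -> 0 <= a /\ a%:~R <= beta.
Proof.
elim: u => [|b t IH] //= [b_ge0 lt1 adm_t]; rewrite in_cons.
case/predU1P=> [-> | /(IH adm_t) //]; split=> //.
have := word_value_ge0 adm_t; rewrite ltr_pdivrMr // mul1r in lt1; lra.
Qed.

Lemma Tbeta_ge0_lt1 x : 0 <= Tbeta beta x < 1.
Proof.
rewrite /Tbeta; have /andP[h1 h2] := floor_itv (beta * x).
rewrite intrD in h2; apply/andP; split; lra.
Qed.

Lemma Tbeta_decomp x : x = ((Num.floor (beta * x))%:~R + Tbeta beta x) / beta.
Proof. by rewrite /Tbeta; field; rewrite gt_eqF. Qed.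

Lemma greedy_mkseqS x n :
  mkseq (greedy beta x) n.+1 =
  greedy beta x 0 :: mkseq (greedy beta (Tbeta beta x)) n.
Proof.
rewrite /mkseq /= (iotaDl 1 0) -map_comp; congr (_ :: _).
by apply: eq_map => i; rewrite /greedy /= add0n -iterS iterSr.
Qed.

Lemma greedy_prefix_admissible x n : 0 <= x < 1 ->
  admissible (mkseq (greedy beta x) n) /\
  word_value (mkseq (greedy beta x) n) <= x.
Proof.
elim: n x => [|n IH] x /andP[x_ge0 x_lt1]; first by [].
rewrite greedy_mkseqS; have [adm_t le_t] := IH _ (Tbeta_ge0_lt1 x).
have le_x : word_value (greedy beta x 0 :: mkseq (greedy beta (Tbeta beta x)) n) <= x.
  by rewrite /= [leRHS]Tbeta_decomp ler_pM2r ?invr_gt0 // lerD2l.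
split=> //; split=> //; last exact: le_lt_trans le_x x_lt1.
by rewrite /greedy /= floor_ge0 mulr_ge0 // ltW.
Qed.

Lemma greedy_word_value s k : admissible s -> (k < size s)%N ->
  greedy beta (word_value s) k = nth 0 s k.
Proof.
elim: s k => [|a t IH] // k [a_ge0 lt1 adm_t] lt_k.
have floor_a : Num.floor (beta * word_value (a :: t)) = a.
  rewrite /= mulrC mulfVK ?gt_eqF //; apply: floor_def.
  by rewrite lerDl word_value_ge0 //= intrD ltrD2l word_value_lt1.
case: k lt_k => [|k] lt_k; first exact: floor_a.
have T_at : Tbeta beta (word_value (a :: t)) = word_value t.
  by rewrite /Tbeta floor_a /=; field; rewrite gt_eqF.
by rewrite /= -(IH k adm_t lt_k) /greedy iterSr T_at.
Qed.

Lemma in_Xbeta_admissible w :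
  (forall n, admissible (mkseq w n)) -> in_Xbeta beta w.
Proof.
move=> adm_w n; exists (word_value (mkseq w n)).
split; first exact: word_value_ge0.
split=> [|k lt_k]; first exact: word_value_lt1.
by rewrite greedy_word_value ?size_mkseq // nth_mkseq.
Qed.

Lemma word_in_Xbeta_admissible u : word_in_Xbeta beta u -> admissible u.
Proof.
case=> w [w_in u_pre]; have [x [x_ge0 [x_lt1 greedy_x]]] := w_in (size u).
have x_itv : 0 <= x < 1 by rewrite x_ge0 x_lt1.
have [adm_x _] := greedy_prefix_admissible (size u) x_itv.
suff <- : mkseq (greedy beta x) (size u) = u by [].
apply: (@eq_from_nth _ 0); rewrite ?size_mkseq // => k lt_k.
by rewrite nth_mkseq // greedy_x // u_pre.
Qed.

Lemma conjugate_remainder_bound (z : R[i]) u : `|z| < 1 -> admissible u ->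
  `|z ^+ size u - digits_eval z u| <= 1 + (beta%:C)%C / (1 - `|z|).
Proof.
move=> z_lt1 adm_u; apply: le_trans (ler_normB _ _) (lerD _ _).
  by rewrite normrX exprn_ile1 // ltW.
apply: norm_digits_eval_le; rewrite ?ler0c ?ltW // => a /(admissible_digits adm_u).
case=> a_ge0 a_le; rewrite -(rmorph_int (real_complex R)) ger0_norm ?ler0c ?ler0z //.
by rewrite lecR.
Qed.

Lemma pisot_small_gap_coefs : pisot beta -> exists n M, forall u,
  admissible u -> beta ^+ size u * (1 - word_value u) < 1 ->
  exists2 c, c \in bounded_words M n &
    beta ^+ size u * (1 - word_value u) = \sum_(i < n) (nth 0 c i)%:~R * beta ^+ i.
Proof.
move=> /pisot_conjugates [p [rs [p_monic p_beta uniq_rs size_p rs_conj]]].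
set n := size rs.
pose B z := if z == (beta%:C)%C then 1 else 1 + (beta%:C)%C / (1 - `|z|).
have B_ge0 : {in rs, forall z, 0 <= B z}.
  move=> z /rs_conj[_ z_lt1]; rewrite /B; case: eqP => // /eqP /z_lt1 lt1.
  by rewrite addr_ge0 // divr_ge0 ?ler0c ?subr_ge0 ?ltW.
have [K K_ge0 le_K] := coef_bounded_interpolation uniq_rs B_ge0.
have [M le_KM] := complex_ler_natr K_ge0.
exists n, M => u adm_u; set m := size u; set y := _ * _ => lty1.
have y_gt0 : 0 < y by rewrite mulr_gt0 ?exprn_gt0 // subr_gt0 word_value_lt1.
pose r := Pdiv.CommonRing.rmodp ('X^m - digits_poly u) p.
have r_root (F : comNzRingType) (x : F) : root (map_poly intr p) x ->
    (map_poly intr r).[x] = x ^+ m - digits_eval x u.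
  move=> px0; rewrite horner_rmodp_root // rmorphB /= map_polyXn.
  by rewrite hornerD hornerN hornerXn horner_digits_poly.
have r_beta : (map_poly intr r).[beta] = y.
  by rewrite r_root // digits_eval_word_value /y mulrBr mulr1.
have r_bound : {in rs, forall z, `|(map_poly intr r).[z]| <= B z}.
  move=> z /rs_conj[z_root z_lt1]; rewrite r_root // /B.
  case: eqP => [-> | /eqP /z_lt1 lt1]; last exact: conjugate_remainder_bound.
  rewrite -(rmorph_digits_eval (real_complex R)) -rmorphXn -rmorphB /=.
  rewrite -r_root // r_beta ger0_norm ?ler0c ?ltW //.
  by rewrite -(rmorph1 (real_complex R)) ltcR.
have size_r : (size (map_poly (intr : int -> R[i]) r) <= n)%N.
  rewrite size_map_inj_poly ?rmorph0 //; last exact: intr_inj.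
  by rewrite -ltnS -size_p Pdiv.CommonRing.ltn_rmodpN0 ?monic_neq0.
exists (mkseq (fun i => r`_i) n).
  rewrite -[n in bounded_words _ n](size_mkseq (fun i => r`_i)).
  apply: bounded_wordsP => _ /mapP[i _ ->].
  rewrite -(ler_int R[i]) intr_norm; apply: le_trans le_KM.
  by have := le_K _ size_r r_bound i; rewrite coef_map.
rewrite -r_beta (horner_coef_wide _ (leq_trans _ size_r)); last first.
  by rewrite !size_map_inj_poly //; exact: intr_inj.
by apply: eq_bigr => i _; rewrite nth_mkseq // coef_map.
Qed.

Lemma pisot_gap : pisot beta ->
  exists2 c, 0 < c & forall u, admissible u ->
    c <= beta ^+ size u * (1 - word_value u).
Proof.
move=> /pisot_small_gap_coefs[n [M small_gap]].
pose g (c : seq int) := \sum_(i < n) (nth 0 c i)%:~R * beta ^+ i.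
have [e e_gt0 le_e] := exists_pos_lbound [seq g c | c <- bounded_words M n].
exists (Num.min 1 e) => [|u adm_u]; first by rewrite lt_min ltr01.
have [le1 | lt1] := leP 1 (beta ^+ size u * (1 - word_value u)).
  by rewrite ge_min le1.
have [c c_in y_eq] := small_gap u adm_u lt1.
have gc_gt0 : 0 < g c.
  by rewrite /g -y_eq mulr_gt0 ?exprn_gt0 // subr_gt0 word_value_lt1.
by rewrite ge_min y_eq le_e ?map_f ?orbT.
Qed.

Section ZeroPadding.
Variables (c : R) (N : nat).
Hypothesis gap : forall u, admissible u ->
  c <= beta ^+ size u * (1 - word_value u).
Hypothesis pad : (beta ^+ N)^-1 <= c.

Lemma admissible_cat_nseq0_cat u t :
  admissible u -> admissible t -> admissible (u ++ nseq N 0 ++ t).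
Proof.
elim: u => [|a u IH] adm_u adm_t; first exact: admissible_nseq0_cat.
have [a_ge0 _ adm_u'] := adm_u; split=> //; last exact: IH.
rewrite -cat_cons !word_value_cat word_value_nseq0 add0r size_nseq.
have lt_t : word_value t / beta ^+ N / beta ^+ size (a :: u) <
            (beta ^+ N)^-1 / beta ^+ size (a :: u).
  rewrite ltr_pM2r ?invr_gt0 ?exprn_gt0 // mulrC gtr_pMr ?invr_gt0 ?exprn_gt0 //.
  exact: word_value_lt1.
rewrite -ltrBrDl; apply: lt_le_trans lt_t _.
by rewrite ler_pdivrMr ?exprn_gt0 // mulrC (le_trans pad (gap adm_u)).
Qed.

Lemma admissible_flatten_nseq0 I (x : I -> seq int) s :
  (forall i, admissible (x i)) ->
  admissible (flatten [seq x i ++ nseq N 0 | i <- s]).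
Proof.
move=> adm_x; elim: s => [|i s IH] //=.
by rewrite -catA; apply: admissible_cat_nseq0_cat.
Qed.

Lemma in_Xbeta_zero_padded x : (0 < N)%N -> (forall i, admissible (x i)) ->
  in_Xbeta beta (concat_stream (fun i => nseq N 0 ++ x i)).
Proof.
move=> N_gt0 adm_x; apply: in_Xbeta_admissible => n.
rewrite concat_stream_prefix => [|i]; last by rewrite size_cat size_nseq ltn_addr.
set L := flatten _.
have size_L : (n <= size L)%N.
  by apply: size_flatten_iota_ge => i; rewrite size_cat size_nseq ltn_addr.
rewrite -(takel_cat (nseq N 0) size_L) flatten_map_cat_shift.
exact/admissible_take/admissible_nseq0_cat/admissible_flatten_nseq0.
Qed.

End ZeroPadding.

End BetaWords.

Theorem lemma6p1 (R : realType) (beta : R) :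
  pisot beta ->
  exists N0 : nat, forall (x : nat -> seq int) (N : nat),
    (forall i, word_in_Xbeta beta (x i)) -> (N0 < N)%N ->
    in_Xbeta beta (concat_stream (fun i => nseq N 0 ++ x i)).
Proof.
move=> pisot_beta; have beta_gt1 : 1 < beta by case: pisot_beta.
have [c c_gt0 gap] := pisot_gap beta_gt1 pisot_beta.
have [N0 pad] := exists_expr_ge c^-1 beta_gt1.
exists N0 => x N x_in lt_N.
have pad_N : (beta ^+ N)^-1 <= c.
  rewrite -[c]invrK lef_pV2 ?posrE ?invr_gt0 ?exprn_gt0 ?(lt_trans ltr01 beta_gt1) //.
  exact/pad/ltnW.
apply: (in_Xbeta_zero_padded beta_gt1 gap pad_N) => [|i].
- exact: leq_ltn_trans lt_N.
- exact: word_in_Xbeta_admissible.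
Qed.
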